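(* Let $n\ge2$ and let $\mathrm S=\mathrm S_1\cup\mathrm S_2\cup\mathrm S_3$ with $\mathrm S_1\subseteq\{B_{ij}:1\le i<j\le n\}$, $\mathrm S_2\subseteq\{C_{ij}:1\le i<j\le n\}$, $\mathrm S_3\subseteq\{D_{ij}:1\le i<j\le n\}$, and let $\mathscr G_{\mathrm S}$ be its associated edge-colored multigraph. Then the real Lie algebra generated by $\mathrm S$ equals $\mathfrak{su}(n)$ if and only if one of the following holds: (i) $\mathscr G_{\mathrm S}$ has edges of at least two colors, and the Blue edges together with the node set $\{1,\dots,n\}$ form a connected graph; (ii) $\mathscr G_{\mathrm S}$ is connected and has a self-loop; (iii) $\mathscr G_{\mathrm S}$ is connected and has a cycle containing an odd number of Red edges.
   Context: $E_{ij}$ is the $n\times n$ matrix unit; $B_{ij}=E_{ij}-E_{ji}$, $C_{ij}=\mathrm i(E_{ij}+E_{ji})$, $D_{ij}=\mathrm i(E_{ii}-E_{jj})$; $\mathfrak{su}(n)$ is the real Lie algebra of traceless skew-Hermitian $n\times n$ matrices with bracket $[X,Y]=XY-YX$. The edge-colored multigraph $\mathscr G_{\mathrm S}$ has node set $\{1,\dots,n\}$, a Blue edge $\{i,j\}$ for each $B_{ij}\in\mathrm S_1$, a Red edge $\{i,j\}$ for each $C_{ij}\in\mathrm S_2$, and Green self-loops $\{i,i\}$ and $\{j,j\}$ for each $D_{ij}\in\mathrm S_3$; edges with same endpoints but different colors are distinct. A walk alternates nodes and edges with consecutive endpoints; a cycle is a closed walk; connected means any two nodes are joined by a walk. *)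

From mathcomp Require Import all_boot all_order all_algebra all_reals.
From mathcomp Require Import complex.
Set Implicit Arguments. Unset Strict Implicit. Unset Printing Implicit Defensive.
Import Order.TTheory GRing.Theory Num.Theory.
Local Open Scope ring_scope.

Section Defs.
Variables (R : realType) (n : nat).
Local Notation C := (R[i]).
Local Notation M := ('M[C]_n).

Definition matB (i j : 'I_n) : M := delta_mx i j - delta_mx j i.
Definition matC (i j : 'I_n) : M := (Complex 0 1 : C) *: (delta_mx i j + delta_mx j i).
Definition matD (i j : 'I_n) : M := (Complex 0 1 : C) *: (delta_mx i i - delta_mx j j).

Definition in_su (A : M) : Prop := (map_mx Num.conj A)^T = - A /\ \tr A = 0.

Inductive lie_gen (S : M -> Prop) : M -> Prop :=
| lg_gen A : S A -> lie_gen S A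
| lg_zero : lie_gen S 0
| lg_add A B : lie_gen S A -> lie_gen S B -> lie_gen S (A + B)
| lg_scale (r : R) A : lie_gen S A -> lie_gen S ((Complex r 0 : C) *: A)
| lg_br A B : lie_gen S A -> lie_gen S B -> lie_gen S (A *m B - B *m A).

Definition gen_set (E1 E2 E3 : {set 'I_n * 'I_n}) (A : M) : Prop :=
  (exists2 p, p \in E1 & A = matB p.1 p.2) \/
  (exists2 p, p \in E2 & A = matC p.1 p.2) \/
  (exists2 p, p \in E3 & A = matD p.1 p.2).

Inductive color := Blue | Red | Green.

Definition is_red (c : color) : bool := if c is Red then true else false.
Definition is_blue (c : color) : bool := if c is Blue then true else false.

Definition colored_edge (E1 E2 E3 : {set 'I_n * 'I_n}) (c : color) (x y : 'I_n) : bool :=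
  match c with
  | Blue => ((x, y) \in E1) || ((y, x) \in E1)
  | Red => ((x, y) \in E2) || ((y, x) \in E2)
  | Green => (x == y) && [exists z, ((x, z) \in E3) || ((z, x) \in E3)]
  end.

Fixpoint is_walk (E1 E2 E3 : {set 'I_n * 'I_n}) (x : 'I_n) (s : seq (color * 'I_n)) : bool :=
  match s with
  | [::] => true
  | (c, y) :: s' => colored_edge E1 E2 E3 c x y && is_walk E1 E2 E3 y s'
  end.

Definition walk_end (x : 'I_n) (s : seq (color * 'I_n)) : 'I_n := last x (map snd s).

Definition connected_graph (E1 E2 E3 : {set 'I_n * 'I_n}) : Prop :=
  forall x y : 'I_n, exists s, is_walk E1 E2 E3 x s /\ walk_end x s = y.

Definition blue_connected (E1 E2 E3 : {set 'I_n * 'I_n}) : Prop :=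
  forall x y : 'I_n, exists s, [/\ is_walk E1 E2 E3 x s, all (fun p => is_blue p.1) s
                                 & walk_end x s = y].

Definition has_color (E1 E2 E3 : {set 'I_n * 'I_n}) (c : color) : Prop :=
  exists x y, colored_edge E1 E2 E3 c x y.

Definition at_least_two_colors (E1 E2 E3 : {set 'I_n * 'I_n}) : Prop :=
  exists c1 c2, [/\ c1 <> c2, has_color E1 E2 E3 c1 & has_color E1 E2 E3 c2].

Definition has_self_loop (E1 E2 E3 : {set 'I_n * 'I_n}) : Prop :=
  exists c x, colored_edge E1 E2 E3 c x x.

Definition has_odd_red_cycle (E1 E2 E3 : {set 'I_n * 'I_n}) : Prop :=
  exists x s, [/\ is_walk E1 E2 E3 x s, walk_end x s = x & odd (count (fun p => is_red p.1) s)].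

End Defs.

(* Call a != b linked when both B_ab and C_ab lie in the generated algebra L.
   Then D_ab = [B_ab, C_ab]/2 lies in L, and bracketing with D_ab exchanges
   B_by and C_by up to sign, so a linked pair spreads along every edge; in a
   connected graph all pairs become linked, and the B_ab, C_ab, D_ab span su(n).
   Brackets of B's and C's along a walk from a give B or C between a and the
   endpoint according to the parity of the red edges walked, so each of the
   conditions (i)-(iii) produces a linked pair.
   Conversely, if the graph is disconnected then L commutes with the projection
   onto a component, which B_xy does not for x, y in different components.  If
   it is connected without self-loops or odd red cycles, some phi : nodes ->
   bool is flipped exactly by the red edges; every X in L then has real
   (a, b)-entry when phi a = phi b and imaginary one otherwise, which fails
   for D_ab. *)

From mathcomp Require Import all_boot all_order all_algebra all_reals.
From mathcomp Require Import complex ring boolp.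
Import Order.TTheory GRing.Theory Num.Theory.
Local Open Scope complex_scope.
Local Open Scope ring_scope.
Set Implicit Arguments. Unset Strict Implicit. Unset Printing Implicit Defensive.

Definition lie_bracket (K : pzRingType) (n : nat) (X Y : 'M[K]_n) : 'M[K]_n :=
  X *m Y - Y *m X.

Lemma ltn_ord_neq (n : nat) (x y : 'I_n) : (x < y)%N -> x != y.
Proof. by move=> lt_xy; apply: contraTneq lt_xy => ->; rewrite ltnn. Qed.

Section DiagonalMatrices.
Variables (K : comPzRingType) (n : nat).
Implicit Types (a b : 'I_n) (phi : 'I_n -> bool).

Lemma comm_mxZ (f g : 'M[K]_n) k : comm_mx f g -> comm_mx f (k *: g).
Proof. by rewrite /comm_mx -scalemxAr -scalemxAl => ->. Qed.

Lemma comm_diag_delta (d : 'rV[K]_n) a b :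
  d 0 a = d 0 b -> comm_mx (diag_mx d) (delta_mx a b).
Proof.
move=> dab; apply/matrixP => u v; rewrite mul_diag_mx mul_mx_diag !mxE.
case: (eqVneq u a) => [->|ua]; case: (eqVneq v b) => [->|vb];
  by rewrite /= ?andbF ?mulr0n ?mulr1n ?mulr0 ?mul0r ?mulr1 ?mul1r.
Qed.

Definition sign_mx phi : 'M[K]_n := diag_mx (\row_u (-1) ^+ phi u).

Lemma sign_mxK phi : sign_mx phi *m sign_mx phi = 1%:M.
Proof.
rewrite mulmx_diag -diag_const_mx; congr diag_mx.
by apply/rowP => u; rewrite !mxE -expr2 sqrr_sign.
Qed.

Lemma sign_mx_delta phi a b :
  sign_mx phi *m delta_mx a b *m sign_mx phi = (-1) ^+ (phi a (+) phi b) *: delta_mx a b.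
Proof.
apply/matrixP => u v; rewrite mul_mx_diag mul_diag_mx !mxE signr_addb.
case: (eqVneq u a) => [->|ua]; case: (eqVneq v b) => [->|vb];
  by rewrite /= ?andbF ?mulr0n ?mulr1n ?mulr0 ?mul0r ?mulr1 ?mul1r.
Qed.

End DiagonalMatrices.

Arguments sign_mx {K n} phi.

Section LieGen.
Variables (R : realType) (n : nat) (S : 'M[R[i]]_n -> Prop).
Local Notation L := (lie_gen S).

Lemma lie_genZ (r : R) X : L X -> L (r%:C *: X).
Proof. exact: lg_scale. Qed.

Lemma lie_genN X : L X -> L (- X).
Proof. by rewrite -scaleN1r -(rmorphN1 (real_complex R)); apply: lie_genZ. Qed.

Lemma lie_gen_sign (b : bool) X : L X -> L ((-1) ^+ b *: X).
Proof. by case: b; rewrite ?expr1 ?scaleN1r ?expr0 ?scale1r //; apply: lie_genN. Qed.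

Lemma lie_gen_unsign (b : bool) X : L ((-1) ^+ b *: X) -> L X.
Proof. by move/(lie_gen_sign b); rewrite scalerA -signr_addb addbb expr0 scale1r. Qed.

Lemma lie_gen_halve X : L (X *+ 2) -> L X.
Proof.
move=> LX2; have two_neq0 : (2%:R : R) != 0 by rewrite pnatr_eq0.
have -> : X = (2%:R^-1)%:C *: (X *+ 2).
  by rewrite -scaler_nat scalerA -(rmorph_nat (real_complex R)) -rmorphM mulVf // scale1r.
exact: lie_genZ.
Qed.

Lemma lie_gen_sum (I : finType) (P : pred I) (F : I -> 'M[R[i]]_n) :
  (forall i, P i -> L (F i)) -> L (\sum_(i | P i) F i).
Proof. by move=> LF; apply: big_ind => //; [exact: lg_zero | exact: lg_add]. Qed.

End LieGen.

Section Brackets.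
Variables (R : realType) (n : nat).
Implicit Types (a b c : 'I_n) (p q : bool).
Local Notation B := (@matB R n).
Local Notation C := (@matC R n).
Local Notation D := (@matD R n).

Definition matBC q a b := if q then C a b else B a b.

Lemma mulii : 'i%C * 'i%C = -1 :> R[i].
Proof. by rewrite -expr2 sqr_i. Qed.

Ltac expand_entries :=
  rewrite /lie_bracket /matBC /matB /matC /matD /= ?expr0 ?expr1 ?scale1r ?scaleN1r;
  rewrite -?scalemxAl -?scalemxAr ?(mulmxDl, mulmxDr, mulmxBl, mulmxBr, mulmxN, mulNmx)
    ?mul_delta_mx_cond ?eqxx;
  repeat match goal with
  | H : is_true (?x != ?y) |- context [?x == ?y] => rewrite (negbTE H)
  | H : is_true (?x != ?y) |- context [?y == ?x] => rewrite [y == x]eq_sym (negbTE H)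
  end;
  apply/matrixP => u v; rewrite !(mxE, mulmxnE);
  repeat match goal with
  | H : is_true (?x != ?x) |- _ => by rewrite eqxx in H
  | |- context [?x == ?x] => rewrite eqxx
  | |- context [?x == ?y] =>
      let E := fresh "E" in case: (eqVneq x y) => E; [subst | rewrite ?(negbTE E)]
  end; rewrite /=; ring: mulii.

Lemma matBC_sym q a b : matBC q b a = (-1) ^+ (~~ q) *: matBC q a b.
Proof. by case: q; expand_entries. Qed.

Lemma bracketBC p q a b c : a != b -> b != c -> a != c ->
  lie_bracket (matBC p a b) (matBC q b c) = (-1) ^+ (p && q) *: matBC (p (+) q) a c.
Proof. by move=> ab bc ac; case: p; case: q; expand_entries. Qed.

Lemma bracketBC_same a b : a != b -> lie_bracket (B a b) (C a b) = D a b *+ 2.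
Proof. by move=> ab; expand_entries. Qed.

Lemma bracketD_same q a b : a != b ->
  lie_bracket (D a b) (matBC q a b) = (-1) ^+ q *: matBC (~~ q) a b *+ 2.
Proof. by move=> ab; case: q; expand_entries. Qed.

Lemma bracketD_adjacent q a b c : a != b -> b != c -> a != c ->
  lie_bracket (D a b) (matBC q b c) = (-1) ^+ (~~ q) *: matBC (~~ q) b c.
Proof. by move=> ab bc ac; case: q; expand_entries. Qed.

End Brackets.

Section LieGenBrackets.
Variables (R : realType) (n : nat) (S : 'M[R[i]]_n -> Prop).
Local Notation L := (lie_gen S).
Local Notation BC := (@matBC R n).
Implicit Types (a b c : 'I_n) (p q : bool).

Lemma lie_gen_matBC_sym q a b : L (BC q a b) -> L (BC q b a).
Proof. by move=> Lab; rewrite matBC_sym; apply: lie_gen_sign. Qed.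

Lemma lie_gen_matBC_trans p q a b c : a != b -> b != c -> a != c ->
  L (BC p a b) -> L (BC q b c) -> L (BC (p (+) q) a c).
Proof.
move=> ab bc ac Lp Lq; apply: (lie_gen_unsign (b := p && q)).
by rewrite -(bracketBC _ p q ab bc ac); apply: lg_br.
Qed.

Lemma lie_gen_matD a b :
  a != b -> L (matB R a b) -> L (matC R a b) -> L (matD R a b).
Proof. by move=> ab LB LC; apply: lie_gen_halve; rewrite -bracketBC_same //; apply: lg_br. Qed.

End LieGenBrackets.

Section SpecialUnitary.
Variables (R : realType) (n : nat).
Local Notation M := 'M[R[i]]_n.
Local Notation E := (@delta_mx R[i] n n).
Local Notation B := (@matB R n).
Local Notation C := (@matC R n).
Local Notation D := (@matD R n).
Local Notation Re := (@complex.Re R).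
Local Notation Im := (@complex.Im R).
Implicit Types (a b l : 'I_n) (A X Y : M).

Lemma conj_real (r : R) : (r%:C)^* = r%:C.
Proof. exact: conjc_real. Qed.

Lemma conj_i : ('i%C)^* = - 'i%C :> R[i].
Proof. by rewrite complexiE conjCi. Qed.

Lemma map_conj_scale_i X : map_mx Num.conj ('i%C *: X) = - 'i%C *: map_mx Num.conj X.
Proof. by rewrite map_mxZ; congr (_ *: _); exact: conj_i. Qed.

Lemma map_conj_scale_real (r : R) X : map_mx Num.conj (r%:C *: X) = r%:C *: map_mx Num.conj X.
Proof. by rewrite map_mxZ; congr (_ *: _); exact: conj_real. Qed.

Lemma mxtrace_delta a b : \tr (E a b) = (a == b)%:R.
Proof.
rewrite /mxtrace (bigD1 a) //= big1 ?addr0 => [|u /negbTE ua]; rewrite mxE ?eqxx //.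
by rewrite ua.
Qed.

Lemma su_matB a b : a != b -> in_su (B a b).
Proof.
move=> ab; split; first by rewrite map_mxB !map_delta_mx linearB /= !trmx_delta opprB.
by rewrite raddfB /= !mxtrace_delta (negbTE ab) eq_sym (negbTE ab) subrr.
Qed.

Lemma su_matC a b : a != b -> in_su (C a b).
Proof.
move=> ab; split.
  by rewrite map_conj_scale_i map_mxD !map_delta_mx linearZ linearD /= !trmx_delta addrC scaleNr.
by rewrite mxtraceZ raddfD /= !mxtrace_delta (negbTE ab) eq_sym (negbTE ab) addr0 mulr0.
Qed.

Lemma su_matD a b : in_su (D a b).
Proof.
split.
  by rewrite map_conj_scale_i map_mxB !map_delta_mx linearZ linearB /= !trmx_delta scaleNr.
by rewrite mxtraceZ raddfB /= !mxtrace_delta !eqxx subrr mulr0.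
Qed.

Lemma su_lie_bracket X Y : in_su X -> in_su Y -> in_su (lie_bracket X Y).
Proof.
move=> [adjX trX] [adjY trY]; split; last by rewrite raddfB /= mxtrace_mulC subrr.
rewrite map_mxB !map_mxM linearB /= !trmx_mul.
by rewrite adjX adjY !mulmxN !mulNmx !opprK opprB.
Qed.

Lemma lie_gen_su (S : M -> Prop) : (forall A, S A -> in_su A) ->
  forall A, lie_gen S A -> in_su A.
Proof.
move=> Ssu A; elim => {A} [A /Ssu //| | X Y _ [adjX trX] _ [adjY trY] | r X _ [adjX trX] |].
- by split; [apply/matrixP => u v; rewrite !mxE rmorph0 oppr0 | rewrite mxtrace0].
- by split; [rewrite map_mxD linearD /= adjX adjY opprD | rewrite mxtraceD trX trY addr0].
- by split; [rewrite map_conj_scale_real linearZ /= adjX scalerN | rewrite mxtraceZ trX mulr0].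
- by move=> X Y _ suX _ suY; apply: su_lie_bracket.
Qed.

Lemma offdiag_decomp z a b :
  z *: E a b - z^* *: E b a = (Re z)%:C *: B a b + (Im z)%:C *: C a b.
Proof.
have -> : z^* = (Re z)%:C - 'i%C * (Im z)%:C.
  by case: z => x y; apply/eqP; rewrite eq_complex /=; apply/andP; split; apply/eqP; ring.
by rewrite {1}[z]complexE /matB /matC; apply/matrixP => u v; rewrite !mxE; ring.
Qed.

Lemma diag_decomp (y : 'I_n -> R) l : \sum_u y u = 0 ->
  \sum_u ('i%C * (y u)%:C) *: E u u = \sum_u (y u)%:C *: D u l.
Proof.
move=> y0; rewrite /matD.
have -> : \sum_u (y u)%:C *: ('i%C *: (E u u - E l l)) =
    \sum_u ('i%C * (y u)%:C) *: E u u - (\sum_u 'i%C * (y u)%:C) *: E l l.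
  by rewrite scaler_suml -sumrB; apply: eq_bigr => u _; rewrite scalerA scalerBr mulrC.
by rewrite -mulr_sumr -rmorph_sum y0 rmorph0 mulr0 scale0r subr0.
Qed.

Lemma su_entries A : in_su A -> [/\ forall u v, A v u = - (A u v)^*,
  forall u, A u u = 'i%C * (Im (A u u))%:C & \sum_u Im (A u u) = 0].
Proof.
move=> [/matrixP adjA trA].
have anti u v : A v u = - (A u v)^* by have := adjA v u; rewrite !mxE => ->; rewrite opprK.
have diag u : A u u = 'i%C * (Im (A u u))%:C.
  have : Re (A u u) = 0.
    move: (anti u u); case: (A u u) => x y [/eqP].
    by rewrite -subr_eq0 opprK -mulr2n mulrn_eq0 => /eqP.
  by move=> Re0; rewrite {1}[A u u]complexE Re0 rmorph0 add0r.
split => //; apply/eqP; rewrite -(fmorph_eq0 (real_complex R)).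
rewrite -(mulrI_eq0 _ (lregP (neq0Ci _))) -complexiE rmorph_sum mulr_sumr.
by rewrite -(eq_bigr _ (fun u _ => diag u)); apply/eqP.
Qed.

Lemma mx_double_sum A : A *+ 2 = \sum_u \sum_v (A u v *: E u v + A v u *: E v u).
Proof.
have sumA := matrix_sum_delta A.
under eq_bigr do rewrite big_split.
by rewrite big_split /= -sumA exchange_big /= -sumA mulr2n.
Qed.

Lemma su_sub_lie_gen (S : M -> Prop) l A :
  (forall a b, a != b -> lie_gen S (B a b) /\ lie_gen S (C a b)) ->
  in_su A -> lie_gen S A.
Proof.
move=> LBC /su_entries [anti diag trIm].
have Ldiag : lie_gen S (\sum_u A u u *: E u u).
  under eq_bigr do rewrite diag.
  rewrite (diag_decomp (y := fun u => Im (A u u)) l trIm); apply: lie_gen_sum => u _.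
  apply: lie_genZ; have [->|ul] := eqVneq u l.
    by rewrite /matD subrr scaler0; exact: lg_zero.
  by have [LB LC] := LBC _ _ ul; apply: lie_gen_matD.
have Loff u v : u != v -> lie_gen S (A u v *: E u v + A v u *: E v u).
  move=> uv; rewrite (anti u v) scaleNr offdiag_decomp.
  by have [LB LC] := LBC _ _ uv; apply: lg_add; apply: lie_genZ.
apply: lie_gen_halve; rewrite mx_double_sum.
have -> : \sum_u \sum_v (A u v *: E u v + A v u *: E v u) =
    (\sum_u A u u *: E u u) *+ 2 +
    \sum_u \sum_(v | v != u) (A u v *: E u v + A v u *: E v u).
  by rewrite -sumrMnl -big_split; apply: eq_bigr => u _; rewrite (bigD1 u) //= mulr2n.
rewrite mulr2n; apply: lg_add; first exact: lg_add.
by apply: lie_gen_sum => u _; apply: lie_gen_sum => v vu; apply: Loff; rewrite eq_sym.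
Qed.

End SpecialUnitary.

Section Walks.
Variables (n : nat) (E1 E2 E3 : {set 'I_n * 'I_n}).
Local Notation edge := (colored_edge E1 E2 E3).
Local Notation walk := (is_walk E1 E2 E3).
Implicit Types (x y z : 'I_n) (c : color) (s t : seq (color * 'I_n)).

Definition red_parity s := odd (count (fun p => is_red p.1) s).

Definition reach x y := exists s, walk x s /\ walk_end x s = y.

Lemma edge_sym c x y : edge c x y = edge c y x.
Proof. by case: c => /=; [rewrite orbC | rewrite orbC | case: eqVneq => [->|]]. Qed.

Lemma walk_cat x s t : walk x (s ++ t) = walk x s && walk (walk_end x s) t.
Proof. by elim: s x => [|[c y] s IHs] x //=; rewrite IHs andbA. Qed.

Lemma walk_end_cat x s t : walk_end x (s ++ t) = walk_end (walk_end x s) t.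
Proof. by rewrite /walk_end map_cat last_cat. Qed.

Lemma walk_rcons x s c z :
  walk x (rcons s (c, z)) = walk x s && edge c (walk_end x s) z.
Proof. by rewrite -cats1 walk_cat /= andbT. Qed.

Lemma walk_end_rcons x s c z : walk_end x (rcons s (c, z)) = z.
Proof. by rewrite /walk_end map_rcons last_rcons. Qed.

Lemma red_parity_cat s t : red_parity (s ++ t) = red_parity s (+) red_parity t.
Proof. by rewrite /red_parity count_cat oddD. Qed.

Lemma red_parity_rcons s c z : red_parity (rcons s (c, z)) = red_parity s (+) is_red c.
Proof. by rewrite -cats1 red_parity_cat /red_parity /= addn0 oddb. Qed.

Lemma red_parity_blue s : all (fun p => is_blue p.1) s -> red_parity s = false.
Proof. by rewrite /red_parity; elim: s => [|[[] z] s IHs] //=. Qed.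

Lemma reach_refl x : reach x x.
Proof. by exists [::]. Qed.

Lemma reach_edge x y c z : reach x y -> edge c y z -> reach x z.
Proof.
by move=> [s [ws <-]] e; exists (rcons s (c, z)); rewrite walk_rcons ws e walk_end_rcons.
Qed.

Lemma walk_ind (P : 'I_n -> bool -> Prop) x s :
  (forall c y z q, P y q -> edge c y z -> P z (q (+) is_red c)) ->
  P x false -> walk x s -> P (walk_end x s) (red_parity s).
Proof.
move=> Pedge; rewrite -[red_parity s]addFb; elim: s x false => [|[c y] s IHs] x q Pxq /=.
  by rewrite addbF.
case/andP => e ws; rewrite /red_parity /= oddD oddb addbA.
exact: IHs (Pedge _ _ _ _ Pxq e) ws.
Qed.

Lemma connected_of_blue_connected :
  blue_connected E1 E2 E3 -> connected_graph E1 E2 E3.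
Proof. by move=> bc x y; have [s [ws _ e]] := bc x y; exists s. Qed.

Section RedPotential.
Hypotheses (conn : connected_graph E1 E2 E3) (no_odd : ~ has_odd_red_cycle E1 E2 E3).

Lemma red_parity_unique x s t : walk x s -> walk x t ->
  walk_end x s = walk_end x t -> red_parity s = red_parity t.
Proof.
move=> ws wt est; have [u [wu eu]] := conn (walk_end x s) x.
have even v : walk x v -> walk_end x v = walk_end x s -> red_parity (v ++ u) = false.
  move=> wv ev; apply/negbTE/negP => odd_vu; apply: no_odd; exists x, (v ++ u).
  by rewrite walk_cat walk_end_cat ev wv wu eu.
move: (even s ws erefl) (even t wt (esym est)); rewrite !red_parity_cat.
by case: (red_parity s) (red_parity t) (red_parity u) => [] [] [].
Qed.

Lemma red_potential x0 :
  exists phi : 'I_n -> bool, forall c x y, edge c x y -> phi y = phi x (+) is_red c.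
Proof.
pose phi x := asbool (exists s, [/\ walk x0 s, walk_end x0 s = x & red_parity s]).
have phiE s : walk x0 s -> phi (walk_end x0 s) = red_parity s.
  move=> ws; apply/asboolP/idP => [[t [wt et pt]]|ps]; last by exists s.
  by rewrite (red_parity_unique ws wt (esym et)).
exists phi => c x y e; have [s [ws ex]] := conn x0 x.
have ws' : walk x0 (rcons s (c, y)) by rewrite walk_rcons ws ex e.
by rewrite -ex -(walk_end_rcons x0 s c y) !phiE // red_parity_rcons.
Qed.

End RedPotential.
End Walks.

Section Sufficiency.
Variables (R : realType) (n : nat) (E1 E2 E3 : {set 'I_n * 'I_n}).
Hypothesis E1_lt : forall p, p \in E1 -> (p.1 < p.2)%N.
Hypothesis E2_lt : forall p, p \in E2 -> (p.1 < p.2)%N.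
Hypothesis E3_lt : forall p, p \in E3 -> (p.1 < p.2)%N.
Local Notation edge := (colored_edge E1 E2 E3).
Local Notation walk := (is_walk E1 E2 E3).
Local Notation L := (lie_gen (@gen_set R n E1 E2 E3)).
Local Notation BC := (@matBC R n).
Implicit Types (a b x y z : 'I_n) (c : color) (q r : bool).

Local Notation BC_set q := (if q then E2 else E1).

Lemma lie_gen_matBC_of_edge q x y :
  ((x, y) \in BC_set q) || ((y, x) \in BC_set q) -> x != y /\ L (BC q x y).
Proof.
have gen u v : (u, v) \in BC_set q -> u != v /\ L (BC q u v).
  move=> uvE; split; first by apply: ltn_ord_neq; case: q uvE => [/E2_lt | /E1_lt].
  by apply: lg_gen; case: q uvE => uvE; [right; left | left]; exists (u, v).
by case/orP => /gen [uv Luv] //; split; [rewrite eq_sym | exact: lie_gen_matBC_sym].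
Qed.

Lemma lie_gen_edge c x y :
  edge c x y -> if c is Green then x = y else x != y /\ L (BC (is_red c) x y).
Proof.
case: c; [exact: (@lie_gen_matBC_of_edge false) | exact: (@lie_gen_matBC_of_edge true) |].
by case/andP => /eqP.
Qed.

Definition linked a b := a != b /\ forall q, L (BC q a b).

Definition has_linked_pair := exists a b, linked a b.

Lemma linked_of_both q a b : a != b -> L (BC q a b) -> L (BC (~~ q) a b) -> linked a b.
Proof. by move=> ab Lq Lnq; split => // -[]; case: q Lq Lnq. Qed.

Lemma linked_sym a b : linked a b -> linked b a.
Proof. by move=> [ab Lab]; split => [|q]; [rewrite eq_sym | exact: lie_gen_matBC_sym]. Qed.

Lemma linked_trans x y z : linked x y -> linked y z -> x != z -> linked x z.
Proof.
move=> [xy Lxy] [yz Lyz] xz; split => // q.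
exact: lie_gen_matBC_trans xy yz xz (Lxy false) (Lyz q).
Qed.

Lemma linked_of_matD q a b : a != b -> L (matD R a b) -> L (BC q a b) -> linked a b.
Proof.
move=> ab LD Lq; apply: (linked_of_both ab Lq); apply: (lie_gen_unsign (b := q)).
by apply: lie_gen_halve; rewrite -(bracketD_same _ q ab); apply: lg_br.
Qed.

Lemma linked_step a b y r : linked a b -> b != y -> L (BC r b y) -> linked b y.
Proof.
move=> lab bne Lr; have [->|ya] := eqVneq y a; first exact: linked_sym.
have [ab Lab] := lab; have LD := lie_gen_matD ab (Lab false) (Lab true).
apply: (linked_of_both bne Lr); apply: (lie_gen_unsign (b := ~~ r)).
by rewrite -(bracketD_adjacent _ r ab bne) 1?eq_sym //; apply: lg_br.
Qed.

Lemma linked_edge a b c y : linked a b -> edge c b y -> b = y \/ linked b y.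
Proof.
move=> lab e; have := lie_gen_edge e.
case: c e => e; last by move=> ->; left.
all: by move=> [bne Lr]; right; exact: linked_step lab bne Lr.
Qed.

(* Invariant along a walk from a, where q is the parity of the red edges walked. *)
Definition lie_reached a x q :=
  [\/ has_linked_pair, x = a /\ q = false | x != a /\ L (BC q a x)].

Lemma lie_reached_step a q r y z : y != z -> L (BC r y z) ->
  lie_reached a y q -> lie_reached a z (q (+) r).
Proof.
move=> yz Lr [seed|[ya q0]|[ya Lq]]; first exact: Or31.
  by apply: Or33; rewrite q0 -ya [z == y]eq_sym.
have ay : a != y by rewrite eq_sym.
have [za|za] := eqVneq z a; last first.
  have az : a != z by rewrite eq_sym.
  by apply: Or33; split => //; exact: lie_gen_matBC_trans ay yz az Lq Lr.
move: Lr; rewrite za => /lie_gen_matBC_sym Lr.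
have [<-|qr] := eqVneq q r; first by apply: Or32; rewrite addbb.
apply: Or31; exists a, y; apply: (linked_of_both ay Lq).
by case: q r qr Lr {Lq} => [] [].
Qed.

Lemma lie_reached_walk_end a s : walk a s -> lie_reached a (walk_end a s) (red_parity s).
Proof.
apply: walk_ind => [c y z q Py e|]; last by apply: Or32.
have := lie_gen_edge e; case: c e => e; last by move=> <-; rewrite addbF.
all: by move=> [yz Lr]; exact: lie_reached_step yz Lr Py.
Qed.

Lemma linked_pair_of_odd_cycle : has_odd_red_cycle E1 E2 E3 -> has_linked_pair.
Proof.
case=> x [s [ws ex odd_s]]; case: (lie_reached_walk_end ws) => [//|[_ even_s]|[nx _]].
  by move: odd_s; rewrite -/(red_parity s) even_s.
by move: nx; rewrite ex eqxx.
Qed.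

Lemma linked_pair_of_blue_red x y : blue_connected E1 E2 E3 -> edge Red x y -> has_linked_pair.
Proof.
move=> bc e; have [xy LC] := lie_gen_edge e; have [s [ws blue exy]] := bc x y.
have even_s := red_parity_blue blue.
case: (lie_reached_walk_end ws) => [//|[exx _]|[_]]; first by move: xy; rewrite -exy exx eqxx.
by rewrite even_s exy => LB; exists x, y; exact: linked_of_both xy LB LC.
Qed.

Section Connected.
Hypothesis conn : connected_graph E1 E2 E3.

Lemma linked_partner v : has_linked_pair -> exists w, linked v w.
Proof.
case=> a0 [b0 l0]; have [s [ws <-]] := conn a0 v.
apply: (walk_ind (P := fun x _ => exists w, linked x w)) ws => [c y z _ [w lyw] e|];
  last by exists b0.
case: (linked_edge (linked_sym lyw) e) => [<-|lyz]; first by exists w.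
by exists y; exact: linked_sym.
Qed.

Lemma linked_all : has_linked_pair -> forall a b, a != b -> linked a b.
Proof.
move=> seed a b ab; have [w law] := linked_partner a seed.
have [s [ws eb]] := conn a b.
have : walk_end a s = a \/ linked a (walk_end a s).
  apply: (walk_ind (P := fun x _ => x = a \/ linked a x)) ws => [c y z _ Py e|]; last by left.
  have [x lxy] : exists x, linked x y.
    by case: Py => [->|lay]; [exists w; exact: linked_sym | exists a].
  case: (linked_edge lxy e) => [<-//|lyz].
  case: Py => [<-|lay]; first by right.
  have [za|za] := eqVneq z a; first by left.
  by right; apply: linked_trans lay lyz _; rewrite eq_sym.
by rewrite eb => -[ba|//]; move: ab; rewrite ba eqxx.
Qed.

Lemma lie_gen_su_of_linked_pair : has_linked_pair -> forall A, L A <-> in_su A.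
Proof.
move=> seed A; split.
  apply: lie_gen_su => X.
  case=> [[p /E1_lt/ltn_ord_neq pq ->]|[[p /E2_lt/ltn_ord_neq pq ->]|[p _ ->]]].
  - exact: su_matB.
  - exact: su_matC.
  - exact: su_matD.
have [l _] := seed; apply: (su_sub_lie_gen l) => a b /(linked_all seed) [_ Lab].
exact: conj (Lab false) (Lab true).
Qed.

Lemma linked_pair_of_matD p : p \in E3 -> has_linked_pair.
Proof.
move=> pE3; have xy := ltn_ord_neq (E3_lt pE3).
have LD : L (matD R p.1 p.2) by apply: lg_gen; right; right; exists p.
have [s [ws e]] := conn p.1 p.2.
case: (lie_reached_walk_end ws) => [//|[exy _]|[_ Lq]]; first by move: xy; rewrite -e exy eqxx.
by rewrite e in Lq; exists p.1, p.2; exact: linked_of_matD xy LD Lq.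
Qed.

Lemma linked_pair_of_self_loop : has_self_loop E1 E2 E3 -> has_linked_pair.
Proof.
case=> c [x e]; have := lie_gen_edge e.
case: c e => e; [by case=> /eqP | by case=> /eqP | move=> _].
case/andP: e => _ /existsP [z /orP [xz|zx]].
  exact: linked_pair_of_matD xz.
exact: linked_pair_of_matD zx.
Qed.

End Connected.

Lemma linked_pair_of_two_colors :
  at_least_two_colors E1 E2 E3 -> blue_connected E1 E2 E3 -> has_linked_pair.
Proof.
move=> [c1 [c2 [c12 h1 h2]]] bc.
have [[x [y e]]|[x [y e]]] : has_color E1 E2 E3 Red \/ has_color E1 E2 E3 Green.
  by case: c1 c2 c12 h1 h2 => [] [] // _ h1 h2; first [by left | by right].
- exact: linked_pair_of_blue_red bc e.
- apply: (linked_pair_of_self_loop (connected_of_blue_connected bc)).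
  by have /= xy := lie_gen_edge e; move: e; rewrite -xy => e; exists Green, x.
Qed.

End Sufficiency.

Section Necessity.
Variables (R : realType) (n : nat) (E1 E2 E3 : {set 'I_n * 'I_n}).
Local Notation edge := (colored_edge E1 E2 E3).
Local Notation L := (lie_gen (@gen_set R n E1 E2 E3)).
Local Notation M := 'M[R[i]]_n.
Implicit Types (a b x y : 'I_n) (A X Y : M) (phi : 'I_n -> bool).

Lemma lie_gen_comm_diag (d : 'rV[R[i]]_n) :
  (forall c x y, edge c x y -> d 0 x = d 0 y) -> forall A, L A -> comm_mx (diag_mx d) A.
Proof.
move=> dE A; elim => {A} [A| |X Y _ ? _ ?|r X _ ?|X Y _ ? _ ?].
- case=> [[p pE ->]|[[p pE ->]|[p _ ->]]].
  + have dp : d 0 p.1 = d 0 p.2 by apply: (dE Blue); rewrite /= -surjective_pairing pE.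
    by apply: comm_mxB; apply: comm_diag_delta.
  + have dp : d 0 p.1 = d 0 p.2 by apply: (dE Red); rewrite /= -surjective_pairing pE.
    by apply: comm_mxZ; apply: comm_mxD; apply: comm_diag_delta.
  + by apply: comm_mxZ; apply: comm_mxB; apply: comm_diag_delta.
- exact: comm_mx0.
- exact: comm_mxD.
- exact: comm_mxZ.
- by apply: comm_mxB; apply: comm_mxM.
Qed.

Lemma connected_of_lie_gen_su :
  (forall A, L A <-> in_su A) -> connected_graph E1 E2 E3.
Proof.
move=> Lsu x y; have [<-|xy] := eqVneq x y; first exact: reach_refl.
pose d : 'rV[R[i]]_n := \row_z (asbool (reach E1 E2 E3 x z))%:R.
have dE c z w : edge c z w -> d 0 z = d 0 w.
  move=> e; rewrite !mxE; congr (nat_of_bool _)%:R.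
  have e' : edge c w z by rewrite edge_sym.
  by apply/idP/idP => /asboolP r; apply/asboolP; [exact: reach_edge r e | exact: reach_edge r e'].
have /matrixP/(_ x y) := lie_gen_comm_diag dE ((Lsu _).2 (su_matB R xy)).
rewrite mul_diag_mx mul_mx_diag !mxE !eqxx (negbTE xy) /= subr0.
case: (asboolP (reach E1 E2 E3 x x)) (reach_refl E1 E2 E3 x) => // _ _.
by case: asboolP => // _ /eqP; rewrite -!natrM eqr_nat.
Qed.

(* Entrywise: (A a b)^* = (-1)^(phi a + phi b) * A a b. *)
Definition conj_twisted phi A :=
  map_mx Num.conj A = sign_mx phi *m A *m sign_mx phi.

Lemma conj_twisted_mul phi X Y :
  conj_twisted phi X -> conj_twisted phi Y -> conj_twisted phi (X *m Y).
Proof.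
rewrite /conj_twisted map_mxM => -> ->.
by rewrite !mulmxA -[_ *m sign_mx phi *m sign_mx phi]mulmxA sign_mxK mulmx1.
Qed.

Lemma lie_gen_conj_twisted phi :
  (forall c x y, edge c x y -> phi y = phi x (+) is_red c) ->
  ~ has_self_loop E1 E2 E3 -> forall A, L A -> conj_twisted phi A.
Proof.
move=> phiE noloop A; elim => {A} [A| |X Y _ tX _ tY|r X _ tX|X Y _ tX _ tY].
- case=> [[p pE ->]|[[p pE ->]|[p pE ->]]].
  + have : phi p.2 = phi p.1 (+) false.
      by apply: (phiE Blue); rewrite /= -surjective_pairing pE.
    rewrite addbF => phip.
    rewrite /conj_twisted /matB map_mxB !map_delta_mx mulmxBr mulmxBl !sign_mx_delta.
    by rewrite phip addbb expr0 !scale1r.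
  + have : phi p.2 = phi p.1 (+) true.
      by apply: (phiE Red); rewrite /= -surjective_pairing pE.
    rewrite addbT => phip.
    rewrite /conj_twisted /matC map_conj_scale_i map_mxD !map_delta_mx.
    rewrite -scalemxAr -scalemxAl mulmxDr mulmxDl !sign_mx_delta phip addbN addNb addbb /=.
    by rewrite expr1 !scaleN1r -opprD scalerN scaleNr.
  + case: noloop; exists Green, p.1; rewrite /= eqxx /=.
    by apply/existsP; exists p.2; rewrite -surjective_pairing pE.
- by rewrite /conj_twisted map_mx0 mulmx0 mul0mx.
- by rewrite /conj_twisted map_mxD tX tY mulmxDr mulmxDl.
- by rewrite /conj_twisted map_conj_scale_real tX -scalemxAr -scalemxAl.
- rewrite /conj_twisted map_mxB (conj_twisted_mul tX tY) (conj_twisted_mul tY tX).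
  by rewrite mulmxBr mulmxBl.
Qed.

Lemma conj_twisted_diag phi A a : conj_twisted phi A -> (A a a)^* = A a a.
Proof.
move/matrixP/(_ a a); rewrite mul_mx_diag mul_diag_mx !mxE => ->.
by rewrite mulrC mulrA -expr2 sqrr_sign mul1r.
Qed.

Lemma matD_not_conj_twisted phi a b : a != b -> ~ conj_twisted phi (matD R a b).
Proof.
move=> ab /(conj_twisted_diag a); rewrite !mxE eqxx (negbTE ab) /= mulr0n subr0 mulr1.
move/(congr1 (fun z => z + 'i%C)); rewrite conj_i addNr => /eqP.
by rewrite eq_sym -mulr2n mulrn_eq0 complexiE (negbTE (neq0Ci _)).
Qed.

Lemma self_loop_or_odd_cycle_of_lie_gen_su : (2 <= n)%N -> connected_graph E1 E2 E3 ->
  (forall A, L A <-> in_su A) -> has_self_loop E1 E2 E3 \/ has_odd_red_cycle E1 E2 E3.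
Proof.
move=> n2 conn Lsu; have [|noloop] := pselect (has_self_loop E1 E2 E3); first by left.
have [|noodd] := pselect (has_odd_red_cycle E1 E2 E3); first by right.
pose a : 'I_n := Ordinal (ltnW n2); pose b : 'I_n := Ordinal n2.
have ab : a != b by [].
have [phi phiE] := red_potential conn noodd a.
case: (matD_not_conj_twisted (phi := phi) ab).
exact: lie_gen_conj_twisted phiE noloop _ ((Lsu _).2 (su_matD R a b)).
Qed.

End Necessity.

Unset Implicit Arguments. Set Strict Implicit.

Theorem proposition1 (R : realType) (n : nat) (E1 E2 E3 : {set 'I_n * 'I_n}) :
  (2 <= n)%N ->
  (forall p, p \in E1 -> (p.1 < p.2)%N) ->
  (forall p, p \in E2 -> (p.1 < p.2)%N) ->
  (forall p, p \in E3 -> (p.1 < p.2)%N) ->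
  ((forall A : 'M[R[i]]_n, lie_gen (gen_set E1 E2 E3) A <-> in_su A) <->
   [\/ at_least_two_colors E1 E2 E3 /\ blue_connected E1 E2 E3,
       connected_graph E1 E2 E3 /\ has_self_loop E1 E2 E3
     | connected_graph E1 E2 E3 /\ has_odd_red_cycle E1 E2 E3]).
Proof.
move=> n2 E1_lt E2_lt E3_lt; split => [Lsu|conds].
  have conn := connected_of_lie_gen_su Lsu.
  by case: (self_loop_or_odd_cycle_of_lie_gen_su n2 conn Lsu) => ?; [apply: Or32 | apply: Or33].
have [conn seed] : connected_graph E1 E2 E3 /\ has_linked_pair R E1 E2 E3.
  case: conds => [[two bc]|[conn loop]|[conn odd]]; split => //.
  - exact: connected_of_blue_connected.
  - exact (linked_pair_of_two_colors R E1_lt E2_lt E3_lt two bc).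
  - exact (linked_pair_of_self_loop R E1_lt E2_lt E3_lt conn loop).
  - exact (linked_pair_of_odd_cycle R E1_lt E2_lt odd).
exact: lie_gen_su_of_linked_pair E1_lt E2_lt conn seed.
Qed.
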